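(* Let the timeline be $(\mathbb{Z},\leq)$, let $\Pi$ be a propositional DatalogMTL program, $\mathcal{D}$ a dataset in normal form, $Q$ a proposition and $t_B\le t_E$ integers. Let $B,E,Q'$ be fresh propositions and $\Pi^Q=\Pi\cup\{Q'\leftarrow Q\,\mathcal{U}_{[0,\infty)}\,E,\ \bot\leftarrow B\wedge Q'\}$. Then $Q@[t_B,t_E]$ is entailed from $(\mathcal{D},\Pi)$ under the $s$-brave semantics if and only if there exists a subset $\mathcal{D}'\subseteq\mathcal{D}$ such that $\mathcal{D}'$ is $\Pi$-consistent and $\mathcal{D}'\cup\{B@\{t_B-1\},E@\{t_E+1\}\}$ is $\Pi^Q$-inconsistent.
   Context: A propositional DatalogMTL program uses only nullary predicates. $\mathfrak{M},t\models A\,\mathcal{U}_\varrho A'$ iff there is $t'$ with $t'-t\in\varrho$, $\mathfrak{M},t'\models A'$, and $A$ holds at all $s\in(t,t')$. A dataset is a finite set of facts $P@\iota$ ($\iota$ a non-empty interval); $\Pi$-consistency and entailment are as usual. A set of facts is in normal form if it contains no two distinct facts $P@\iota_1,P@\iota_2$ with $\iota_1\cup\iota_2$ (as a set of integers) equal to the set of integers of an interval. An $s$-repair of $\mathcal{D}$ w.r.t. $\Pi$ is a $\subseteq$-maximal $\Pi$-consistent subset of $\mathcal{D}$. $Q@[t_B,t_E]$ is entailed under $s$-brave semantics if $(\mathcal{R},\Pi)\models Q@[t_B,t_E]$ for some $s$-repair $\mathcal{R}$. *)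

From Stdlib Require Import ZArith List.
Import ListNotations.
Open Scope Z_scope.

Section DatalogMTL.
Variable Pr : Type.

(* Metric intervals ϱ of operators: nonnegative, integer endpoints,
   upper end possibly +infinity (None).  Over Z every such interval (open or
   closed ends) denotes the same integer set as a closed one. *)
Record mint := MI { mlo : nat ; mhi : option nat }.
Definition in_mint (r : mint) (d : Z) : Prop :=
  Z.of_nat (mlo r) <= d /\
  match mhi r with None => True | Some h => d <= Z.of_nat h end.

Inductive batom :=
| BTop | BBot | BProp (p : Pr)
| BBoxMinus (r : mint) (a : batom) | BBoxPlus (r : mint) (a : batom)
| BDiaMinus (r : mint) (a : batom) | BDiaPlus (r : mint) (a : batom)
| BSince (r : mint) (a1 a2 : batom) | BUntil (r : mint) (a1 a2 : batom).

Inductive hatom :=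
| HProp (p : Pr) | HBoxMinus (r : mint) (h : hatom) | HBoxPlus (r : mint) (h : hatom).

(* A rule: head (None = ⊥) and body conjunction *)
Record rule := Rule { rhead : option hatom ; rbody : list batom }.
Definition program := list rule.

Definition interp := Pr -> Z -> Prop.

Fixpoint holds (M : interp) (a : batom) (t : Z) : Prop :=
  match a with
  | BTop => True
  | BBot => False
  | BProp p => M p t
  | BBoxMinus r a => forall s, in_mint r (t - s) -> holds M a s
  | BBoxPlus r a => forall s, in_mint r (s - t) -> holds M a s
  | BDiaMinus r a => exists s, in_mint r (t - s) /\ holds M a s
  | BDiaPlus r a => exists s, in_mint r (s - t) /\ holds M a s
  | BSince r a1 a2 => exists t', in_mint r (t - t') /\ holds M a2 t' /\
                        forall s, t' < s < t -> holds M a1 s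
  | BUntil r a1 a2 => exists t', in_mint r (t' - t) /\ holds M a2 t' /\
                        forall s, t < s < t' -> holds M a1 s
  end.

Fixpoint hholds (M : interp) (h : hatom) (t : Z) : Prop :=
  match h with
  | HProp p => M p t
  | HBoxMinus r h => forall s, in_mint r (t - s) -> hholds M h s
  | HBoxPlus r h => forall s, in_mint r (s - t) -> hholds M h s
  end.

Definition rule_sat (M : interp) (ru : rule) : Prop :=
  forall t, (forall a, In a (rbody ru) -> holds M a t) ->
    match rhead ru with Some h => hholds M h t | None => False end.

Definition model_prog (M : interp) (P : program) : Prop :=
  forall ru, In ru P -> rule_sat M ru.

(* Dataset intervals: integer endpoints, None = infinite end *)
Record dint := DI { dlo : option Z ; dhi : option Z }.
Definition in_dint (i : dint) (t : Z) : Prop :=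
  match dlo i with None => True | Some l => l <= t end /\
  match dhi i with None => True | Some h => t <= h end.
Definition point (t : Z) : dint := DI (Some t) (Some t).

Record fact := MkFact { fpred : Pr ; fint : dint }.
Definition dataset := list fact.

Definition wf_dataset (D : dataset) : Prop :=
  forall f, In f D -> exists t, in_dint (fint f) t.

Definition model_data (M : interp) (D : dataset) : Prop :=
  forall f, In f D -> forall t, in_dint (fint f) t -> M (fpred f) t.

Definition consistent (P : program) (D : dataset) : Prop :=
  exists M, model_prog M P /\ model_data M D.

Definition entails (P : program) (D : dataset) (Q : Pr) (tB tE : Z) : Prop :=
  forall M, model_prog M P -> model_data M D ->
    forall t, tB <= t <= tE -> M Q t.

Definition normal_form (D : dataset) : Prop :=
  forall f1 f2, In f1 D -> In f2 D -> f1 <> f2 -> fpred f1 = fpred f2 ->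
    ~ exists i : dint, forall t, (in_dint (fint f1) t \/ in_dint (fint f2) t) <-> in_dint i t.

Definition s_repair (P : program) (D R : dataset) : Prop :=
  incl R D /\ consistent P R /\
  forall R', incl R R' -> incl R' D -> consistent P R' -> incl R' R.

Definition s_brave_entails (P : program) (D : dataset) (Q : Pr) (tB tE : Z) : Prop :=
  exists R, s_repair P D R /\ entails P R Q tB tE.

Fixpoint occ_batom (p : Pr) (a : batom) : Prop :=
  match a with
  | BTop | BBot => False
  | BProp q => q = p
  | BBoxMinus _ a | BBoxPlus _ a | BDiaMinus _ a | BDiaPlus _ a => occ_batom p a
  | BSince _ a1 a2 | BUntil _ a1 a2 => occ_batom p a1 \/ occ_batom p a2
  end.
Fixpoint occ_hatom (p : Pr) (h : hatom) : Prop :=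
  match h with
  | HProp q => q = p
  | HBoxMinus _ h | HBoxPlus _ h => occ_hatom p h
  end.
Definition occ_program (p : Pr) (P : program) : Prop :=
  exists ru, In ru P /\
    ((exists h, rhead ru = Some h /\ occ_hatom p h) \/
     (exists a, In a (rbody ru) /\ occ_batom p a)).
Definition occ_dataset (p : Pr) (D : dataset) : Prop :=
  exists f, In f D /\ fpred f = p.

Definition piQ (P : program) (Q B E Q' : Pr) : program :=
  P ++ [Rule (Some (HProp Q')) [BUntil (MI 0 None) (BProp Q) (BProp E)];
        Rule None [BProp B; BProp Q']].

End DatalogMTL.

Arguments wf_dataset {Pr} D.
Arguments normal_form {Pr} D.
Arguments consistent {Pr} P D.
Arguments s_brave_entails {Pr} P D Q tB tE.
Arguments occ_program {Pr} p P.
Arguments occ_dataset {Pr} p D.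
Arguments piQ {Pr} P Q B E Q'.
Arguments MkFact {Pr} fpred fint.

(* (=>) If an s-repair R entails Q on [tB, tE], then in every model of Π^Q and
   R + {B@tB-1, E@tE+1} the formula Q U E holds at tB - 1 (witness tE + 1),
   so Q' and B hold together at tB - 1, which the ⊥-rule forbids.
   (<=) Extend D' greedily to an s-repair R (D is finite).  If R did not
   entail Q, a model of (R, Π) falsifying Q at some t in [tB, tE] becomes a
   model of Π^Q and R + {B@tB-1, E@tE+1} by adding the two marker points and
   making Q' true exactly where Q U E holds; freshness of B, E, Q' keeps Π and
   R satisfied, and Q' fails at tB - 1 because Q fails at t.  Hence the
   dataset D' + markers, being smaller, would be Π^Q-consistent too. *)

From Stdlib Require Import ZArith List Lia Classical Setoid.
Import ListNotations.
Open Scope Z_scope.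

Section Repairs.
Variable Pr : Type.
Implicit Types (P : program Pr) (D R : dataset Pr).

Lemma consistent_antimono P R D : incl R D -> consistent P D -> consistent P R.
Proof.
  intros HRD [M [HP HD]]. exists M. split; auto.
  intros f Hf. apply HD, HRD, Hf.
Qed.

Lemma greedy_extension P D : forall L R0, incl R0 D -> consistent P R0 ->
  exists R, incl R0 R /\ incl R D /\ consistent P R /\
    forall f, In f L -> In f D -> consistent P (f :: R) -> In f R.
Proof.
  induction L as [|f L IH]; intros R0 HR0D HR0.
  - exists R0. repeat split; auto using incl_refl. intros f [].
  - destruct (classic (In f D /\ consistent P (f :: R0))) as [[HfD Hf]|Hf].
    + destruct (IH (f :: R0)) as (R & HR0R & HRD & HR & Hsat); auto using incl_cons.
      exists R. repeat split; auto using incl_cons_inv.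
      * intros g Hg. apply HR0R. right. exact Hg.
      * intros g [<-|Hg]; auto. intros _ _. apply HR0R. left. reflexivity.
    + destruct (IH R0) as (R & HR0R & HRD & HR & Hsat); auto.
      exists R. repeat split; auto.
      intros g [<-|Hg]; auto.
      intros HfD HfR. exfalso. apply Hf. split; auto.
      apply consistent_antimono with (f :: R); auto.
      intros h [<-|Hh]; [left; reflexivity | right; auto].
Qed.

Lemma s_repair_extend P D R0 : incl R0 D -> consistent P R0 ->
  exists R, incl R0 R /\ s_repair Pr P D R.
Proof.
  intros HR0D HR0.
  destruct (greedy_extension P D D R0 HR0D HR0) as (R & HR0R & HRD & HR & Hsat).
  exists R. repeat split; auto.
  intros R' HRR' HR'D HR' g Hg. apply Hsat; auto.
  apply consistent_antimono with R'; auto using incl_cons.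
Qed.

End Repairs.

Section Agreement.
Variable Pr : Type.
Implicit Types (M : interp Pr) (p : Pr).

Lemma holds_agree M M' a :
  (forall p, occ_batom Pr p a -> forall s, M p s <-> M' p s) ->
  forall t, holds Pr M a t <-> holds Pr M' a t.
Proof.
  induction a; simpl; intros Hag t; try tauto.
  - apply Hag. reflexivity.
  - setoid_rewrite (IHa Hag). reflexivity.
  - setoid_rewrite (IHa Hag). reflexivity.
  - setoid_rewrite (IHa Hag). reflexivity.
  - setoid_rewrite (IHa Hag). reflexivity.
  - setoid_rewrite (IHa1 (fun p h => Hag p (or_introl h))).
    setoid_rewrite (IHa2 (fun p h => Hag p (or_intror h))). reflexivity.
  - setoid_rewrite (IHa1 (fun p h => Hag p (or_introl h))).
    setoid_rewrite (IHa2 (fun p h => Hag p (or_intror h))). reflexivity.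
Qed.

Lemma hholds_agree M M' h :
  (forall p, occ_hatom Pr p h -> forall s, M p s <-> M' p s) ->
  forall t, hholds Pr M h t <-> hholds Pr M' h t.
Proof.
  induction h; simpl; intros Hag t.
  - apply Hag. reflexivity.
  - setoid_rewrite (IHh Hag). reflexivity.
  - setoid_rewrite (IHh Hag). reflexivity.
Qed.

Lemma model_prog_agree M M' P :
  (forall p, occ_program p P -> forall s, M p s <-> M' p s) ->
  model_prog Pr M P -> model_prog Pr M' P.
Proof.
  intros Hag HM ru Hru t Hbody.
  assert (Hbody' : forall a, In a (rbody Pr ru) -> holds Pr M a t).
  { intros a Ha. apply (holds_agree M M'); auto.
    intros p Hp. apply Hag. exists ru. split; eauto. }
  specialize (HM ru Hru t Hbody').
  destruct (rhead Pr ru) as [h|] eqn:Hh; auto.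
  apply (hholds_agree M M'); auto.
  intros p Hp. apply Hag. exists ru. split; eauto.
Qed.

Lemma model_data_agree M M' D :
  (forall p, occ_dataset p D -> forall s, M p s <-> M' p s) ->
  model_data Pr M D -> model_data Pr M' D.
Proof.
  intros Hag HM f Hf t Ht. apply Hag; [exists f; auto | auto].
Qed.

Lemma not_occ_dataset_incl p (R D : dataset Pr) :
  incl R D -> ~ occ_dataset p D -> ~ occ_dataset p R.
Proof. intros HRD HD [f [Hf Hp]]. apply HD. exists f. auto. Qed.

End Agreement.

Section Semantics.
Variable Pr : Type.
Implicit Types (M : interp Pr) (P : program Pr) (D : dataset Pr).

Lemma model_data_app M D1 D2 :
  model_data Pr M (D1 ++ D2) <-> model_data Pr M D1 /\ model_data Pr M D2.
Proof.
  unfold model_data. setoid_rewrite in_app_iff. firstorder.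
Qed.

Lemma model_data_points M p q b e :
  model_data Pr M [MkFact p (point b); MkFact q (point e)] <-> M p b /\ M q e.
Proof.
  split.
  - intros HM. split; [apply (HM (MkFact p (point b))) | apply (HM (MkFact q (point e)))];
      simpl; auto; unfold in_dint; simpl; lia.
  - intros [Hp Hq] f [<-|[<-|[]]] t; unfold in_dint; simpl; intros Ht;
      [replace t with b | replace t with e]; auto; lia.
Qed.

Lemma model_prog_piQ M P Q B E Q' :
  model_prog Pr M (piQ P Q B E Q') <->
  model_prog Pr M P /\
  (forall t t', t <= t' -> M E t' -> (forall s, t < s < t' -> M Q s) -> M Q' t) /\
  (forall t, M B t -> M Q' t -> False).
Proof.
  unfold piQ, model_prog. split.
  - intros HM. repeat split.
    + intros ru Hru. apply HM, in_or_app. left. exact Hru.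
    + intros t t' Htt' HE HQ.
      apply (HM _ (in_or_app _ _ _ (or_intror (in_eq _ _))) t).
      intros a [<-|[]]. exists t'. unfold in_mint. simpl. repeat split; auto; lia.
    + intros t HB HQ'.
      apply (HM _ (in_or_app _ _ _ (or_intror (in_cons _ _ _ (in_eq _ _)))) t).
      intros a [<-|[<-|[]]]; assumption.
  - intros (HP & HU & HBQ') ru Hru. apply in_app_or in Hru as [Hru|[<-|[<-|[]]]].
    + apply HP, Hru.
    + intros t Hbody. destruct (Hbody _ (or_introl eq_refl)) as (t' & Hin & HE & HQ).
      unfold in_mint in Hin. simpl in Hin. apply (HU t t'); auto. lia.
    + intros t Hbody. exact (HBQ' t (Hbody _ (or_introl eq_refl))
                                    (Hbody _ (or_intror (or_introl eq_refl)))).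
Qed.

Definition markers (B E : Pr) (tB tE : Z) : dataset Pr :=
  [MkFact B (point (tB - 1)); MkFact E (point (tE + 1))].

Lemma entails_piQ_inconsistent P R Q B E Q' tB tE :
  tB <= tE -> entails Pr P R Q tB tE ->
  ~ consistent (piQ P Q B E Q') (R ++ markers B E tB tE).
Proof.
  intros Htt Hent [M [HM HD]].
  apply model_prog_piQ in HM as (HP & HU & HBQ').
  apply model_data_app in HD as [HR Hmarks].
  apply model_data_points in Hmarks as [HB HE].
  apply (HBQ' (tB - 1) HB), (HU _ (tE + 1)); auto; [lia|].
  intros s Hs. apply (Hent M HP HR). lia.
Qed.

End Semantics.

Section Counter_model.
Variables (Pr : Type) (P : program Pr) (R : dataset Pr) (M : interp Pr).
Variables (Q B E Q' : Pr) (tB tE : Z).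
Hypotheses (B_P : ~ occ_program B P) (E_P : ~ occ_program E P)
           (Q'_P : ~ occ_program Q' P).
Hypotheses (B_R : ~ occ_dataset B R) (E_R : ~ occ_dataset E R)
           (Q'_R : ~ occ_dataset Q' R).
Hypotheses (B_Q : B <> Q) (E_Q : E <> Q) (Q'_Q : Q' <> Q)
           (B_E : B <> E) (B_Q' : B <> Q') (E_Q' : E <> Q').

Definition marked : interp Pr := fun p s =>
  (p = B /\ s = tB - 1) \/ (p = E /\ s = tE + 1) \/
  (p = Q' /\ s <= tE + 1 /\ forall u, s < u < tE + 1 -> M Q u) \/
  (p <> B /\ p <> E /\ p <> Q' /\ M p s).

Lemma marked_other p s : p <> B -> p <> E -> p <> Q' -> (M p s <-> marked p s).
Proof.
  unfold marked. intros HB HE HQ'. split; [tauto|].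
  intros [[-> _]|[[-> _]|[[-> _]|(_ & _ & _ & H)]]]; tauto.
Qed.

Lemma marked_B s : marked B s -> s = tB - 1.
Proof. unfold marked. intuition congruence. Qed.

Lemma marked_E s : marked E s -> s = tE + 1.
Proof. unfold marked. intuition congruence. Qed.

Lemma marked_Q' s : marked Q' s -> forall u, s < u < tE + 1 -> M Q u.
Proof.
  unfold marked. intros [[? _]|[[? _]|[(_ & _ & HQ)|(_ & _ & ? & _)]]]; congruence || auto.
Qed.

Lemma agree_outside_markers (Fresh : Pr -> Prop) :
  ~ Fresh B -> ~ Fresh E -> ~ Fresh Q' ->
  forall p, Fresh p -> forall s, M p s <-> marked p s.
Proof.
  intros HB HE HQ' p Hp s.
  apply marked_other; intros ->; contradiction.
Qed.

Lemma marked_model_prog t : tB <= t <= tE -> ~ M Q t ->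
  model_prog Pr M P -> model_prog Pr marked (piQ P Q B E Q').
Proof.
  intros Ht HnQ HP. apply model_prog_piQ. repeat split.
  - apply model_prog_agree with M; auto.
    apply agree_outside_markers; assumption.
  - intros s s' Hss' HE HQ. apply marked_E in HE. subst s'.
    right; right; left. repeat split; auto.
    intros u Hu. apply marked_other; auto.
  - intros s HB HQ'. apply marked_B in HB. subst s.
    apply HnQ, (marked_Q' _ HQ'). lia.
Qed.

Lemma marked_model_data :
  model_data Pr M R -> model_data Pr marked (R ++ markers Pr B E tB tE).
Proof.
  intros HR. apply model_data_app. split.
  - apply model_data_agree with M; auto.
    apply agree_outside_markers; assumption.
  - apply model_data_points. unfold marked. auto.
Qed.

End Counter_model.

Lemma inconsistent_piQ_entails (Pr : Type) (P : program Pr) (R : dataset Pr)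
  (Q B E Q' : Pr) (tB tE : Z) :
  ~ occ_program B P /\ ~ occ_dataset B R ->
  ~ occ_program E P /\ ~ occ_dataset E R ->
  ~ occ_program Q' P /\ ~ occ_dataset Q' R ->
  B <> Q -> E <> Q -> Q' <> Q -> B <> E -> B <> Q' -> E <> Q' ->
  ~ consistent (piQ P Q B E Q') (R ++ markers Pr B E tB tE) ->
  entails Pr P R Q tB tE.
Proof.
  intros [? ?] [? ?] [? ?] ? ? ? ? ? ? Hincons M HP HR t Ht.
  apply NNPP. intros HnQ. apply Hincons.
  exists (marked Pr M Q B E Q' tB tE). split.
  - eapply marked_model_prog; eauto.
  - apply marked_model_data; auto.
Qed.

Theorem mainTheorem5 (Pr : Type) (P : program Pr) (D : dataset Pr) (Q : Pr) (tB tE : Z)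
  (B E Q' : Pr)
  (hwf : wf_dataset D) (hnf : normal_form D) (htt : tB <= tE)
  (hB : ~ occ_program B P /\ ~ occ_dataset B D)
  (hE : ~ occ_program E P /\ ~ occ_dataset E D)
  (hQ' : ~ occ_program Q' P /\ ~ occ_dataset Q' D)
  (hfresh : B <> Q /\ E <> Q /\ Q' <> Q /\ B <> E /\ B <> Q' /\ E <> Q') :
  s_brave_entails P D Q tB tE <->
  exists D', incl D' D /\ consistent P D' /\
    ~ consistent (piQ P Q B E Q')
        (D' ++ [MkFact B (point (tB - 1)); MkFact E (point (tE + 1))]).
Proof.
  destruct hfresh as (hBQ & hEQ & hQ'Q & hBE & hBQ' & hEQ').
  split.
  - intros [R [[HRD [HR _]] Hent]].
    exists R. repeat split; auto.
    exact (entails_piQ_inconsistent Pr P R Q B E Q' tB tE htt Hent).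
  - intros [D' [HD'D [HD' Hincons]]].
    destruct (s_repair_extend Pr P D D' HD'D HD') as [R [HD'R HR]].
    exists R. split; [exact HR|].
    destruct HR as [HRD _].
    apply (inconsistent_piQ_entails Pr P R Q B E Q' tB tE);
      try (split; [tauto | apply not_occ_dataset_incl with D; tauto]); auto.
    intros Hcons. apply Hincons.
    apply consistent_antimono with (R ++ markers Pr B E tB tE); auto.
    apply incl_app_app; auto using incl_refl.
Qed.
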